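(* Let $m\ge 3$. For every $\epsilon>0$ there exists $\delta>0$ such that for every polynomial $f(z)=z^{m}+\sum_{k=0}^{m-1}a_kz^k$ satisfying the $\delta$-condition and $|a_{0}|\ge 2^{\frac{1}{m-1}}+\epsilon$, one has $|a_{0}|-b(f)\ge\frac{\epsilon}{3}$; equivalently, $\{z\in\mathbb{C}: |z|\ge |a_0|-\tfrac{\epsilon}{3}\}\subseteq\Omega(f)$.
   Context: A monic polynomial $f(z)=z^{m}+\sum_{k=0}^{m-1}a_{k}z^{k}$ satisfies the $\delta$-condition if $|a_{k}|<\delta$ for all $1\le k\le m-1$ (no condition on $a_0$). $\Omega(f)=\{z\in\hat{\mathbb{C}}: f^{n}(z)\to\infty \text{ as } n\to+\infty\}$ ($f^n$ the $n$-th iterate), and $b(f)=\sup\{|z|: z\in\mathbb{C}\setminus\Omega(f)\}$. *)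

From HB Require Import structures.
From mathcomp Require Import all_boot all_order all_algebra.
From mathcomp Require Import all_classical all_reals all_analysis.
From mathcomp Require Import complex.
Set Implicit Arguments. Unset Strict Implicit. Unset Printing Implicit Defensive.
Import Order.TTheory GRing.Theory Num.Theory.
Local Open Scope ring_scope.
Local Open Scope classical_set_scope.

Definition cabs (R : realType) (z : R[i]) : R := Normc.normc z.

Definition delta_condition (R : realType) (delta : R) (f : {poly R[i]}) : Prop :=
  forall k : nat, (1 <= k)%N -> (k < (size f).-1)%N -> cabs f`_k < delta.

(* z lies in Omega(f) \cap C : the orbit f^n(z) tends to infinity *)
Definition escapes (R : realType) (f : {poly R[i]}) (z : R[i]) : Prop :=
  (fun n : nat => cabs (iter n (fun w => f.[w]) z)) @ \oo --> +oo.

Definition b_of (R : realType) (f : {poly R[i]}) : R :=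
  sup [set cabs z | z in [set z : R[i] | ~ escapes f z]].

From HB Require Import structures.
From mathcomp Require Import all_boot all_order all_algebra.
From mathcomp Require Import all_classical all_reals all_analysis.
From mathcomp Require Import complex.
From mathcomp Require Import ring lra.
Set Implicit Arguments. Unset Strict Implicit. Unset Printing Implicit Defensive.
Import Order.TTheory GRing.Theory Num.Theory.
Local Open Scope ring_scope.
Local Open Scope classical_set_scope.

(* Write m = k + 1 and s = 2^(1/k), so |a_0| >= s + eps.  For |z| >= |a_0| - eps/3
   the leading term dominates: |f(z)| >= |z|^(k+1) - |a_0| - k delta |z|^k, and
   |z|^k >= s^k + 2 eps/3 = 2 + 2 eps/3.  Taking delta with
   k delta (2 + 2 eps/3) = eps/6 gives |f(z)| >= |z| + eps/6, so the region
   |z| >= |a_0| - eps/3 is mapped into itself with the modulus growing by eps/6 at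
   each step; every orbit starting there escapes and b(f) <= |a_0| - eps/3. *)

Lemma norm_horner_monic_ge (C : numDomainType) (n : nat) (d : C)
    (p : {poly C}) (z : C) :
  p \is monic -> size p = n.+2 ->
  (forall i, (0 < i <= n)%N -> `|p`_i| <= d) -> 1 <= `|z| ->
  `|z| ^+ n.+1 - `|p`_0| - n%:R * d * `|z| ^+ n <= `|p.[z]|.
Proof.
move=> pm sp hd z1.
have lead1 : p`_n.+1 = 1 by move/monicP: pm; rewrite lead_coefE sp.
rewrite horner_coef sp big_ord_recr big_ord_recl /= lead1 mul1r expr0 mulr1.
set S := \sum_(i < n) _.
have normS : `|S| <= n%:R * d * `|z| ^+ n.
  rewrite -mulrA mulr_natl -[n in _ *+ n]card_ord -sumr_const.
  apply: le_trans (ler_norm_sum _ _ _) _; apply: ler_sum => i _.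
  rewrite normrM normrX /bump leq0n add1n.
  apply: ler_pM; rewrite ?exprn_ge0 ?normr_ge0 //.
    by apply: hd; rewrite ltn_ord.
  exact: ler_weXn2l.
rewrite addrC; apply: le_trans (lerB_normD _ (p`_0 + S)).
rewrite normrX -addrA -opprD lerD2l lerN2.
by apply: le_trans (ler_normD _ _) _; rewrite lerD2l.
Qed.

Lemma normc_cabs (R : realType) (z : R[i]) : `|z| = (cabs z)%:C%C.
Proof. by case: z. Qed.

Lemma cabs_horner_monic_ge (R : realType) (n : nat) (delta : R)
    (f : {poly R[i]}) (z : R[i]) :
  f \is monic -> size f = n.+2 -> delta_condition delta f -> 1 <= cabs z ->
  cabs z ^+ n.+1 - cabs f`_0 - n%:R * delta * cabs z ^+ n <= cabs f.[z].
Proof.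
move=> fm sf hd z1; rewrite -lecR rmorphB rmorphB /= !rmorphM !rmorphXn /=.
rewrite -!normc_cabs rmorph_nat; apply: norm_horner_monic_ge => //.
  move=> i /andP[i0 iN]; rewrite normc_cabs lecR; apply/ltW/hd => //.
  by rewrite sf.
by rewrite normc_cabs lecR.
Qed.

Lemma lerD_exprS (R : realDomainType) (n : nat) (s d r : R) :
  1 <= s -> 0 <= d -> s + d <= r -> s ^+ n.+1 + d <= r ^+ n.+1.
Proof.
move=> s1 d0 sdr.
have sn1 : 1 <= s ^+ n by rewrite exprn_ege1.
have snr : s ^+ n <= r ^+ n by rewrite lerXn2r ?nnegrE; lra.
rewrite !exprSr; apply: (@le_trans _ _ (s ^+ n * (s + d))).
  by rewrite mulrDr lerD2l ler_peMl.
apply: (@le_trans _ _ (s ^+ n * r)); first by rewrite ler_wpM2l //; lra.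
by rewrite ler_wpM2r //; lra.
Qed.

Lemma expanding_ineq (R : realFieldType) (k : nat) (e r A c : R) :
  0 < e -> 1 <= r -> 2 + 2 * e / 3 <= r ^+ k -> A <= r + e / 3 ->
  0 <= c -> (2 + 2 * e / 3) * c <= e / 6 ->
  r + e / 6 <= r ^+ k.+1 - A - c * r ^+ k.
Proof.
move=> e0 r1 xk Ar c0 ce; rewrite exprSr; set x := r ^+ k in xk *.
have c1 : c <= 1 by nra.
(* [r x >= x + 2 r - 2] and [x (1 - c) >= (2 + 2 e / 3) (1 - c) >= 2 + e / 2]. *)
have rx_ge : 0 <= (r - 1) * (x - 2) by apply: mulr_ge0; lra.
have xc_ge : 0 <= (x - (2 + 2 * e / 3)) * (1 - c) by apply: mulr_ge0; lra.
nra.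
Qed.

Lemma expanding_iter_cvgy (R : realType) (T : Type) (h : T -> R) (g : T -> T)
    (r c : R) (z : T) :
  0 < c -> (forall w, r <= h w -> h w + c <= h (g w)) -> r <= h z ->
  h (iter n g z) @[n --> \oo] --> +oo.
Proof.
move=> c0 expand rz.
have linear n : h z + n%:R * c <= h (iter n g z).
  elim: n => [|n IH]; first by rewrite mul0r addr0.
  have n0 : 0 <= n%:R * c := mulr_ge0 (ler0n _ n) (ltW c0).
  rewrite iterS -natr1 mulrDl mul1r addrA.
  have r_iter : r <= h (iter n g z) by lra.
  by apply: le_trans (expand _ r_iter); rewrite lerD2r.
apply/cvgryPge => A; near=> n; apply: le_trans (linear n).
rewrite -lerBlDl -ler_pdivrMr //.
by near: n; apply: cvgry_ge; exact: cvgr_idn.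
Unshelve. all: end_near.
Qed.

(* [0 <= r] is needed because [sup set0 = 0]. *)
Lemma b_of_le (R : realType) (f : {poly R[i]}) (r : R) :
  0 <= r -> (forall z, r < cabs z -> escapes f z) -> b_of f <= r.
Proof.
move=> r0 esc; rewrite /b_of; set S := [set cabs z | z in _].
have S_ub : ubound S r.
  by move=> _ [w /= nw <-]; rewrite leNgt; apply/negP => /esc.
have [->|/set0P neS] := eqVneq S set0; first by rewrite sup0.
exact: ge_sup.
Qed.

Lemma powR_invn_exprn (R : realType) (a : R) (n : nat) :
  0 <= a -> (0 < n)%N -> (a `^ n%:R^-1) ^+ n = a.
Proof.
move=> a0 n0; rewrite -powR_mulrn ?powR_ge0 // -powRrM mulVf ?powRr1 //.
by rewrite pnatr_eq0 -lt0n.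
Qed.

Theorem mainTheorem10 (R : realType) (m : nat) (hm : (3 <= m)%N)
  (eps : R) (heps : 0 < eps) :
  exists2 delta : R, 0 < delta &
    forall f : {poly R[i]},
      f \is monic -> size f = m.+1 ->
      delta_condition delta f ->
      powR 2 ((m - 1)%:R)^-1 + eps <= cabs f`_0 ->
      eps / 3 <= cabs f`_0 - b_of f.
Proof.
case: m hm => [|[|[|n]]] // _; rewrite subn1 /=.
set s := 2 `^ n.+2%:R^-1.
have s_root : s ^+ n.+2 = 2 by apply: powR_invn_exprn.
have s_ge1 : 1 <= s.
  by rewrite -(powRr0 2); apply: ler_powR; rewrite ?invr_ge0 //; lra.
pose delta := eps / (4 * n.+2%:R * (3 + eps)).
have delta_gt0 : 0 < delta by rewrite divr_gt0 // !mulr_gt0 //; lra.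
have delta_small : (2 + 2 * eps / 3) * (n.+2%:R * delta) = eps / 6.
  by rewrite /delta; field; apply/andP; split; rewrite ?lt0r_neq0 //; lra.
exists delta => // f fm sf hd hA.
have expand w :
    cabs f`_0 - eps / 3 <= cabs w -> cabs w + eps / 6 <= cabs f.[w].
  move=> hw; have w_ge1 : 1 <= cabs w by lra.
  apply: le_trans (cabs_horner_monic_ge fm sf hd w_ge1).
  apply: expanding_ineq => //; last by rewrite delta_small.
  - by rewrite -[X in X + _ <= _]s_root; apply: lerD_exprS => //; lra.
  - by lra.
  - by rewrite mulr_ge0 // ltW.
suff : b_of f <= cabs f`_0 - eps / 3 by lra.
apply: b_of_le => [|z hz]; first by lra.
by apply: (expanding_iter_cvgy (r := cabs f`_0 - eps / 3)) expand _; lra.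
Qed.
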